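(* Let $S$ be an $n$-vertex star. For any $s\ge1$, any straight-line drawing of $S$ with spanning ratio at most $s$ has edge-length ratio in $2^{\Omega(n/s^2)}$.
   Context: A star is a tree with one vertex adjacent to all others. A straight-line drawing maps vertices to distinct points and edges to straight-line segments. In a straight-line drawing $\Gamma$, $\pi_\Gamma(u,v)$ is the minimum total Euclidean length of a path between $u$ and $v$, $\|uv\|_\Gamma$ is their Euclidean distance, and the spanning ratio is $\max_{u\neq v}\pi_\Gamma(u,v)/\|uv\|_\Gamma$. The edge-length ratio is the ratio between the lengths of the longest and shortest edges. The $\Omega$ notation hides an absolute constant. *)

From Stdlib Require Import Reals List Arith Lra Bool.
Import ListNotations.
Open Scope bool_scope.
Open Scope R_scope.

Definition point := (R * R)%type.
Definition dist (p q : point) : R :=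
  sqrt ((fst p - fst q) ^ 2 + (snd p - snd q) ^ 2).

(* A graph on vertex set {0,...,n-1} given by a (symmetric) boolean adjacency.
   The n-vertex star: center 0, leaves 1..n-1. *)
Definition star_adj (u v : nat) : bool :=
  ((u =? 0)%nat && negb (v =? 0)%nat) || ((v =? 0)%nat && negb (u =? 0)%nat).

(* A straight-line drawing: vertices mapped to distinct points
   (edges are the straight segments between the images of their endpoints). *)
Definition is_drawing (n : nat) (G : nat -> point) : Prop :=
  forall u v, (u < n)%nat -> (v < n)%nat -> u <> v -> G u <> G v.

Fixpoint walk_len (G : nat -> point) (x : nat) (l : list nat) : R :=
  match l with
  | [] => 0
  | y :: l' => dist (G x) (G y) + walk_len G y l'
  end.

Fixpoint is_walk (adj : nat -> nat -> bool) (x : nat) (l : list nat) : Prop :=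
  match l with
  | [] => True
  | y :: l' => adj x y = true /\ is_walk adj y l'
  end.

Definition is_path (n : nat) (adj : nat -> nat -> bool) (u v : nat) (l : list nat) : Prop :=
  is_walk adj u l /\ last (u :: l) u = v /\ NoDup (u :: l) /\
  Forall (fun w => (w < n)%nat) (u :: l).

(* Spanning ratio at most s: for all u <> v, pi_G(u,v) <= s * ||uv||, where
   pi_G(u,v) is the minimum length of a path (a minimum over finitely many
   simple paths, so "min <= X" iff "some path has length <= X"). *)
Definition spanning_ratio_le (n : nat) (adj : nat -> nat -> bool)
  (G : nat -> point) (s : R) : Prop :=
  forall u v, (u < n)%nat -> (v < n)%nat -> u <> v ->
    exists l, is_path n adj u v l /\ walk_len G u l <= s * dist (G u) (G v).

Definition edges (n : nat) (adj : nat -> nat -> bool) : list (nat * nat) :=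
  filter (fun p => adj (fst p) (snd p) && (fst p <? snd p)%nat)
         (list_prod (seq 0 n) (seq 0 n)).

Definition edge_lengths (n : nat) (adj : nat -> nat -> bool) (G : nat -> point) : list R :=
  map (fun p => dist (G (fst p)) (G (snd p))) (edges n adj).

Definition list_max (l : list R) : R := fold_right Rmax 0 l.
Definition list_min (l : list R) : R :=
  match l with [] => 0 | x :: r => fold_right Rmin x r end.

Definition edge_length_ratio (n : nat) (adj : nat -> nat -> bool) (G : nat -> point) : R :=
  list_max (edge_lengths n adj G) / list_min (edge_lengths n adj G).

From Stdlib Require Import Reals Rgeom List Arith Lia Lra ZArith.
(* Imported last, so that its [dist] shadows the metric-space [dist] of [Reals]. *)
Import ListNotations.
Open Scope R_scope.

(** Let [l] be the shortest edge and sort the leaves [v] by the dyadic scale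
    [k] with [2^k l <= |c v| < 2^(k+1) l], [c] the center: there are at most
    [log2 ratio + 1] scales.  Within one scale, a grid of side [2^k l / s]
    meets the disk of radius [2^(k+1) l] in [O(s^2)] cells, and two leaves in
    the same cell are at distance [< 2^(k+1) l / s], whereas the only path
    between them passes through [c] and has length [>= 2^(k+1) l].  Hence
    [n - 1 <= 36 s^2 (log2 ratio + 1)]. *)

Lemma dist_sym p q : dist p q = dist q p.
Proof. unfold dist. f_equal. ring. Qed.

Lemma dist_refl p : dist p p = 0.
Proof. unfold dist. rewrite !Rminus_diag, pow_i, Rplus_0_r by lia. apply sqrt_0. Qed.

Lemma dist_triangle p q r : dist p q <= dist p r + dist r q.
Proof.
  destruct p as [a b], q as [c d], r as [e f].
  pose proof (triangle a b c d e f) as H. unfold dist_euc, Rsqr in H.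
  unfold dist; simpl. rewrite !Rmult_1_r. exact H.
Qed.

Lemma dist_pos p q : p <> q -> 0 < dist p q.
Proof.
  destruct p as [a b], q as [c d]; intro Hpq. unfold dist; simpl. apply sqrt_lt_R0.
  rewrite !Rmult_1_r.
  destruct (Req_dec a c) as [<-|Hac].
  - assert (b - d <> 0) by (intro; apply Hpq; f_equal; lra).
    pose proof (Rsqr_pos_lt _ H). pose proof (Rle_0_sqr (a - a)). unfold Rsqr in *. lra.
  - assert (a - c <> 0) by lra.
    pose proof (Rsqr_pos_lt _ H). pose proof (Rle_0_sqr (b - d)). unfold Rsqr in *. lra.
Qed.

Lemma Rabs_fst_le_dist p q : Rabs (fst p - fst q) <= dist p q.
Proof.
  unfold dist. rewrite <- sqrt_Rsqr_abs. apply sqrt_le_1_alt.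
  pose proof (pow2_ge_0 (snd p - snd q)). unfold Rsqr. lra.
Qed.

Lemma Rabs_snd_le_dist p q : Rabs (snd p - snd q) <= dist p q.
Proof.
  unfold dist. rewrite <- sqrt_Rsqr_abs. apply sqrt_le_1_alt.
  pose proof (pow2_ge_0 (fst p - fst q)). unfold Rsqr. lra.
Qed.

Lemma dist_le_Rabs_coords p q :
  dist p q <= Rabs (fst p - fst q) + Rabs (snd p - snd q).
Proof.
  set (x := fst p - fst q); set (y := snd p - snd q).
  pose proof (Rabs_pos x); pose proof (Rabs_pos y).
  unfold dist. fold x y. rewrite <- (sqrt_Rsqr (Rabs x + Rabs y)) by lra.
  apply sqrt_le_1_alt. rewrite <- (pow2_abs x), <- (pow2_abs y).
  unfold Rsqr. nra.
Qed.

Lemma dist_le_walk_len G x l d : dist (G x) (G (last (x :: l) d)) <= walk_len G x l.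
Proof.
  revert x. induction l as [|y l IH]; intro x; simpl.
  - rewrite dist_refl. lra.
  - specialize (IH y). change (last (x :: y :: l) d) with (last (y :: l) d).
    pose proof (dist_triangle (G x) (G (last (y :: l) d)) (G y)). simpl in *. lra.
Qed.

(* Every path between two leaves passes through the center. *)
Lemma star_leaves_spanning n G s u v :
  spanning_ratio_le n star_adj G s -> (1 <= u < n)%nat -> (1 <= v < n)%nat -> u <> v ->
  dist (G 0%nat) (G u) + dist (G 0%nat) (G v) <= s * dist (G u) (G v).
Proof.
  intros Hspan Hu Hv Huv.
  destruct (Hspan u v ltac:(lia) ltac:(lia) Huv) as [[|y l] [[Hwalk [Hlast _]] Hlen]];
    [simpl in Hlast; congruence|].
  destruct Hwalk as [Hadj _].
  assert (y = 0%nat) as ->.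
  { unfold star_adj in Hadj.
    destruct (Nat.eqb_spec u 0), (Nat.eqb_spec y 0); simpl in Hadj; lia || discriminate. }
  pose proof (dist_le_walk_len G 0%nat l u) as Hrest.
  change (last (u :: 0%nat :: l) u) with (last (0%nat :: l) u) in Hlast.
  rewrite Hlast in Hrest. simpl in Hlen. rewrite dist_sym. lra.
Qed.

Lemma in_star_edge_lengths n G x :
  In x (edge_lengths n star_adj G) <->
  exists v, (1 <= v < n)%nat /\ x = dist (G 0%nat) (G v).
Proof.
  unfold edge_lengths, edges. rewrite in_map_iff. split.
  - intros [[a b] [<- Hab]]. rewrite filter_In, in_prod_iff, !in_seq in Hab.
    destruct Hab as [[_ Hb] Hadj]. apply andb_prop in Hadj as [Hadj Hlt].
    apply Nat.ltb_lt in Hlt. unfold star_adj in Hadj. simpl in *.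
    destruct (Nat.eqb_spec a 0), (Nat.eqb_spec b 0); simpl in Hadj; try discriminate; try lia.
    subst a. exists b. split; [lia | reflexivity].
  - intros [v [Hv ->]]. exists (0%nat, v). split; [reflexivity|].
    rewrite filter_In, in_prod_iff, !in_seq. split; [simpl; lia|].
    unfold star_adj; simpl. destruct (Nat.eqb_spec v 0); [lia|].
    simpl. apply Nat.ltb_lt. lia.
Qed.

Lemma list_max_ge l x : In x l -> x <= list_max l.
Proof.
  induction l as [|a l IH]; simpl; [tauto|]. intros [<-|H].
  - apply Rmax_l.
  - eapply Rle_trans; [apply IH, H | apply Rmax_r].
Qed.

Lemma list_min_le l x : In x l -> list_min l <= x.
Proof.
  destruct l as [|a l]; simpl; [tauto|]. revert a.
  induction l as [|b l IH]; intro a; simpl.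
  - intros [<-|[]]; lra.
  - intros [<-|[<-|H]].
    + eapply Rle_trans; [apply Rmin_r | apply IH; simpl; auto].
    + apply Rmin_l.
    + eapply Rle_trans; [apply Rmin_r | apply IH; simpl; auto].
Qed.

Lemma list_min_in l : l <> [] -> In (list_min l) l.
Proof.
  destruct l as [|a l]; [tauto|]. intros _. simpl.
  induction l as [|b l IH]; simpl; auto.
  apply Rmin_case; simpl; auto. simpl in IH. tauto.
Qed.

Lemma Int_part_le_compat x y : x <= y -> (Int_part x <= Int_part y)%Z.
Proof.
  intro Hxy. destruct (base_Int_part x) as [Hx _], (base_Int_part y) as [_ Hy].
  assert (IZR (Int_part x) < IZR (Int_part y + 1)) by (rewrite plus_IZR; lra).
  apply lt_IZR in H. lia.
Qed.

Lemma Int_part_nonneg x : 0 <= x -> (0 <= Int_part x)%Z.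
Proof.
  intro Hx. change 0%Z with (Z.of_nat 0). rewrite <- Int_part_INR.
  apply Int_part_le_compat. simpl. lra.
Qed.

Lemma Int_part_div_eq_Rabs_lt a b h :
  0 < h -> Int_part (a / h) = Int_part (b / h) -> Rabs (a - b) < h.
Proof.
  intros Hh E.
  destruct (base_Int_part (a / h)) as [A1 A2], (base_Int_part (b / h)) as [B1 B2].
  rewrite E in A1, A2.
  replace (a - b) with ((a / h - b / h) * h) by (field; lra).
  rewrite Rabs_mult, (Rabs_pos_eq h) by lra.
  assert (Rabs (a / h - b / h) < 1) by (apply Rabs_def1; lra).
  nra.
Qed.

Lemma Int_part_div_bounds x h A :
  0 < h -> Rabs x < IZR A * h -> (- A <= Int_part (x / h) < A)%Z.
Proof.
  intros Hh Hx. apply Rabs_def2 in Hx as [Hlt Hgt].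
  assert (x / h < IZR A) by (apply Rmult_lt_reg_r with h; [lra|]; field_simplify; lra).
  assert (- IZR A < x / h) by (apply Rmult_lt_reg_r with h; [lra|]; field_simplify; lra).
  destruct (base_Int_part (x / h)) as [B1 B2].
  split.
  - assert (IZR (- A - 1) < IZR (Int_part (x / h))) by (rewrite minus_IZR, opp_IZR; lra).
    apply lt_IZR in H1. lia.
  - apply lt_IZR. lra.
Qed.

Definition grid_cell (h : R) (c p : point) : Z * Z :=
  (Int_part ((fst p - fst c) / h), Int_part ((snd p - snd c) / h)).

Lemma grid_cell_eq_dist_lt h c p q :
  0 < h -> grid_cell h c p = grid_cell h c q -> dist p q < 2 * h.
Proof.
  intros Hh E. injection E as Ex Ey.
  apply Int_part_div_eq_Rabs_lt in Ex, Ey; auto.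
  replace (fst p - fst c - (fst q - fst c)) with (fst p - fst q) in Ex by ring.
  replace (snd p - snd c - (snd q - snd c)) with (snd p - snd q) in Ey by ring.
  pose proof (dist_le_Rabs_coords p q). lra.
Qed.

Lemma grid_cell_bounds h c p A :
  0 < h -> dist c p < IZR A * h ->
  (- A <= fst (grid_cell h c p) < A)%Z /\ (- A <= snd (grid_cell h c p) < A)%Z.
Proof.
  intros Hh Hd. rewrite dist_sym in Hd. simpl.
  split; apply Int_part_div_bounds; auto.
  - eapply Rle_lt_trans; [apply Rabs_fst_le_dist | exact Hd].
  - eapply Rle_lt_trans; [apply Rabs_snd_le_dist | exact Hd].
Qed.

Definition log2 (x : R) : R := ln x / ln 2.

Lemma ln2_pos : 0 < ln 2.
Proof. rewrite <- ln_1. apply ln_increasing; lra. Qed.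

Lemma Rpower2_log2 x : 0 < x -> Rpower 2 (log2 x) = x.
Proof.
  intro Hx. pose proof ln2_pos. unfold Rpower, log2.
  replace (ln x / ln 2 * ln 2) with (ln x) by (field; lra). apply exp_ln, Hx.
Qed.

Lemma log2_le_compat x y : 0 < x -> x <= y -> log2 x <= log2 y.
Proof.
  intros Hx [Hxy|<-]; [|lra]. pose proof ln2_pos. unfold log2, Rdiv.
  apply Rmult_le_compat_r; [left; apply Rinv_0_lt_compat; lra|].
  left. apply ln_increasing; lra.
Qed.

Lemma log2_nonneg x : 1 <= x -> 0 <= log2 x.
Proof.
  intro Hx. replace 0 with (log2 1) by (unfold log2; rewrite ln_1; lra).
  apply log2_le_compat; lra.
Qed.

Lemma Rpower2_Int_part_log2 x :
  0 < x ->
  Rpower 2 (IZR (Int_part (log2 x))) <= x < 2 * Rpower 2 (IZR (Int_part (log2 x))).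
Proof.
  intro Hx. destruct (base_Int_part (log2 x)) as [Hle Hgt].
  rewrite <- (Rpower2_log2 x) at 2 3 by exact Hx.
  split.
  - apply Rle_Rpower; lra.
  - rewrite <- (Rpower_1 2) at 2 by lra. rewrite <- Rpower_plus.
    apply Rpower_lt; lra.
Qed.

Lemma pigeonhole_box (l : list nat) (f : nat -> Z * Z * Z) (a b c : Z) :
  NoDup l ->
  (forall u v, In u l -> In v l -> f u = f v -> u = v) ->
  (forall u, In u l -> let '(i, j, k) := f u in
     (0 <= i < a)%Z /\ (0 <= j < b)%Z /\ (0 <= k < c)%Z) ->
  (length l <= Z.to_nat a * Z.to_nat b * Z.to_nat c)%nat.
Proof.
  intros Hl Hinj Hbox.
  set (enc (t : Z * Z * Z) := let '(i, j, k) := t in (Z.to_nat i, Z.to_nat j, Z.to_nat k)).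
  set (box := list_prod (list_prod (seq 0 (Z.to_nat a)) (seq 0 (Z.to_nat b)))
                        (seq 0 (Z.to_nat c))).
  replace (Z.to_nat a * Z.to_nat b * Z.to_nat c)%nat with (length box)
    by (unfold box; rewrite !length_prod, !length_seq; reflexivity).
  rewrite <- (length_map (fun u => enc (f u))).
  apply NoDup_incl_length.
  - apply NoDup_map_NoDup_ForallPairs; [|exact Hl]. intros u v Hu Hv E.
    apply Hinj; auto. pose proof (Hbox u Hu) as Hbu. pose proof (Hbox v Hv) as Hbv.
    unfold enc in E. destruct (f u) as [[i j] k], (f v) as [[i' j'] k'].
    injection E as E1 E2 E3. f_equal; [f_equal|]; lia.
  - intros t Ht. apply in_map_iff in Ht as [u [<- Hu]]. specialize (Hbox u Hu).
    unfold enc, box. destruct (f u) as [[i j] k].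
    rewrite !in_prod_iff, !in_seq. lia.
Qed.

Section StarDrawing.

Variables (n : nat) (s : R) (G : nat -> point).
Hypotheses (Hs : 1 <= s) (Hn : (2 <= n)%nat) (Hdraw : is_drawing n G)
  (Hspan : spanning_ratio_le n star_adj G s).

Let d (u : nat) : R := dist (G 0%nat) (G u).
Let lmin : R := list_min (edge_lengths n star_adj G).
Let ratio : R := edge_length_ratio n star_adj G.

Lemma star_leaf_length_bounds u :
  (1 <= u < n)%nat -> 0 < lmin /\ 1 <= d u / lmin <= ratio.
Proof.
  intro Hu.
  assert (Hin : forall v, (1 <= v < n)%nat -> In (d v) (edge_lengths n star_adj G))
    by (intros v Hv; apply in_star_edge_lengths; eauto).
  assert (Hlmin : 0 < lmin).
  { assert (Hne : edge_lengths n star_adj G <> []).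
    { intro E. specialize (Hin 1%nat ltac:(lia)). rewrite E in Hin. destruct Hin. }
    apply list_min_in, in_star_edge_lengths in Hne as [w [Hw Ew]].
    fold lmin in Ew. rewrite Ew. apply dist_pos, Hdraw; lia. }
  pose proof (list_min_le _ _ (Hin u Hu)) as Hmin. fold lmin in Hmin.
  pose proof (list_max_ge _ _ (Hin u Hu)) as Hmax.
  split; [exact Hlmin|]. unfold ratio, edge_length_ratio. fold lmin. split.
  - replace 1 with (lmin / lmin) by (field; lra).
    apply Rmult_le_compat_r; [left; apply Rinv_0_lt_compat|]; lra.
  - apply Rmult_le_compat_r; [left; apply Rinv_0_lt_compat|]; lra.
Qed.

Let scale (u : nat) : Z := Int_part (log2 (d u / lmin)).
Let radius (u : nat) : R := Rpower 2 (IZR (scale u)) * lmin.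
Let cell (u : nat) : Z * Z := grid_cell (radius u / s) (G 0%nat) (G u).

Lemma star_leaf_annulus u :
  (1 <= u < n)%nat -> 0 < radius u /\ radius u <= d u < 2 * radius u.
Proof.
  intro Hu. destruct (star_leaf_length_bounds u Hu) as [Hlmin [H1 _]].
  destruct (Rpower2_Int_part_log2 (d u / lmin)) as [Hlo Hhi]; [lra|].
  fold (scale u) in Hlo, Hhi. unfold radius.
  pose proof (exp_pos (IZR (scale u) * ln 2)) as Hpos.
  fold (Rpower 2 (IZR (scale u))) in Hpos.
  replace (d u) with (d u / lmin * lmin) by (field; lra).
  split; [|split]; nra.
Qed.

Lemma star_leaf_scale_bounds u :
  (1 <= u < n)%nat -> (0 <= scale u <= Int_part (log2 ratio))%Z.
Proof.
  intro Hu. destruct (star_leaf_length_bounds u Hu) as [_ [H1 H2]].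
  split; [apply Int_part_nonneg, log2_nonneg | apply Int_part_le_compat, log2_le_compat]; lra.
Qed.

Lemma star_leaf_cell_bounds u :
  (1 <= u < n)%nat ->
  (- up (2 * s) <= fst (cell u) < up (2 * s))%Z /\
  (- up (2 * s) <= snd (cell u) < up (2 * s))%Z.
Proof.
  intro Hu. destruct (star_leaf_annulus u Hu) as [Hr [_ Hd]].
  destruct (archimed (2 * s)) as [HA _].
  assert (Hh : 0 < radius u / s) by (apply Rdiv_lt_0_compat; lra).
  apply grid_cell_bounds; [exact Hh|].
  replace (2 * radius u) with (2 * s * (radius u / s)) in Hd by (field; lra).
  fold (d u). eapply Rlt_le_trans; [exact Hd|]. apply Rmult_le_compat_r; lra.
Qed.

(* Two leaves of the same annulus and the same cell of side [radius / s] are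
   closer than [2 radius / s], too close for the detour through the center. *)
Lemma star_leaf_cell_injective u v :
  (1 <= u < n)%nat -> (1 <= v < n)%nat ->
  scale u = scale v -> cell u = cell v -> u = v.
Proof.
  intros Hu Hv Escale Ecell.
  destruct (Nat.eq_dec u v) as [|Huv]; [assumption|exfalso].
  destruct (star_leaf_annulus u Hu) as [Hr [Hdu _]].
  destruct (star_leaf_annulus v Hv) as [_ [Hdv _]].
  assert (Er : radius v = radius u) by (unfold radius; rewrite Escale; reflexivity).
  unfold cell in Ecell. rewrite Er in Ecell.
  apply grid_cell_eq_dist_lt in Ecell; [|apply Rdiv_lt_0_compat; lra].
  pose proof (star_leaves_spanning n G s u v Hspan Hu Hv Huv) as Hsum.
  fold (d u) (d v) in Hsum.
  assert (s * dist (G u) (G v) < 2 * radius u).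
  { replace (2 * radius u) with (s * (2 * (radius u / s))) by (field; lra).
    apply Rmult_lt_compat_l; lra. }
  lra.
Qed.

Lemma star_leaf_count : INR n - 1 <= (log2 ratio + 1) * (36 * s ^ 2).
Proof.
  set (A := up (2 * s)). set (J := Int_part (log2 ratio)).
  assert (HA : 0 <= IZR A <= 3 * s)
    by (pose proof (archimed (2 * s)) as [HA1 HA2]; fold A in HA1, HA2; lra).
  assert (HAz : (0 <= A)%Z) by (apply le_IZR; lra).
  assert (HJ : (0 <= J)%Z) by (pose proof (star_leaf_scale_bounds 1%nat ltac:(lia)); lia).
  assert (HJlog : IZR J <= log2 ratio) by apply base_Int_part.
  assert (Hcount : (n - 1 <= Z.to_nat (J + 1) * Z.to_nat (2 * A) * Z.to_nat (2 * A))%nat).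
  { replace (n - 1)%nat with (length (seq 1 (n - 1))) by apply length_seq.
    apply (pigeonhole_box _ (fun u => (scale u, fst (cell u) + A, snd (cell u) + A)%Z)).
    - apply seq_NoDup.
    - intros u v Hu Hv E. apply in_seq in Hu, Hv.
      apply pair_equal_spec in E as [[E1 E2]%pair_equal_spec E3].
      apply star_leaf_cell_injective; [lia | lia | exact E1 |].
      apply injective_projections; lia.
    - intros u Hu. apply in_seq in Hu.
      pose proof (star_leaf_scale_bounds u ltac:(lia)).
      pose proof (star_leaf_cell_bounds u ltac:(lia)).
      lia. }
  apply le_INR in Hcount.
  rewrite minus_INR, !mult_INR, !(INR_IZR_INZ (Z.to_nat _)), !Z2Nat.id, mult_IZR, plus_IZR
    in Hcount by lia.
  assert (HJ1 : 0 <= IZR J + 1) by (apply IZR_le in HJ; lra).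
  assert (Hcells : 2 * IZR A * (2 * IZR A) <= 36 * s ^ 2) by nra.
  simpl in *. nra.
Qed.

Lemma star_edge_length_ratio_lower :
  Rpower 2 ((INR n - 1) / (36 * s ^ 2) - 1) <= edge_length_ratio n star_adj G.
Proof.
  destruct (star_leaf_length_bounds 1%nat ltac:(lia)) as [_ [H1 Hratio]].
  pose proof star_leaf_count as Hcount.
  fold ratio. rewrite <- (Rpower2_log2 ratio) by lra.
  apply Rle_Rpower; [lra|].
  apply Rle_trans with ((log2 ratio + 1) * (36 * s ^ 2) / (36 * s ^ 2) - 1).
  - apply Rplus_le_compat_r, Rmult_le_compat_r; [|exact Hcount].
    left. apply Rinv_0_lt_compat. nra.
  - right. field. nra.
Qed.

End StarDrawing.

Theorem corollary1 :
  exists c : R, 0 < c /\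
  exists K : R,
    forall (n : nat) (s : R) (G : nat -> point),
      1 <= s ->
      K <= INR n / s ^ 2 ->
      is_drawing n G ->
      spanning_ratio_le n star_adj G s ->
      Rpower 2 (c * INR n / s ^ 2) <= edge_length_ratio n star_adj G.
Proof.
  exists (1 / 72). split; [lra|]. exists 144.
  intros n s G Hs HK Hdraw Hspan.
  assert (Hs2 : 1 <= s ^ 2) by nra.
  assert (Hn : 144 * s ^ 2 <= INR n).
  { apply Rmult_le_compat_r with (r := s ^ 2) in HK; [|lra].
    replace (INR n / s ^ 2 * s ^ 2) with (INR n) in HK by (field; lra). exact HK. }
  assert (Hn2 : (2 <= n)%nat).
  { destruct (le_lt_dec 2 n) as [|Hlt]; [assumption|].
    assert (INR n <= 1) by (apply (le_INR n 1); lia). lra. }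
  eapply Rle_trans; [|exact (star_edge_length_ratio_lower n s G Hs Hn2 Hdraw Hspan)].
  apply Rle_Rpower; [lra|].
  apply Rmult_le_reg_r with (72 * s ^ 2); [lra|].
  unfold Rdiv. field_simplify; [|lra..]. lra.
Qed.
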